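(* Let $\theta\in\mathbb{R}$, let $\mathcal{A}_\theta$ be the smooth noncommutative torus and let $\tau\in\mathbb{C}$ with $\Im\tau>0$. For every projection $p\in\mathcal{A}_\theta$ (i.e. $p=p^2=p^*$), define $$S_{(\tau)}(p)=\frac{1}{2\pi}\int \sqrt{\det g}\; g^{\mu\nu}\,\partial_\mu p\,\partial_\nu p ,\qquad \psi(p)=-\frac{1}{2\pi i}\int p\big[\partial_1(p)\partial_2(p)-\partial_2(p)\partial_1(p)\big].$$ Then $$S_{(\tau)}(p)\ \geq\ 2\,|\psi(p)| .$$ Moreover, equality $S_{(\tau)}(p)=2|\psi(p)|$ holds whenever $p$ satisfies one of the equations $\bar{\partial}_{(\tau)}(p)\,p=0$, $p\,\partial_{(\tau)}(p)=0$, $\partial_{(\tau)}(p)\,p=0$, $p\,\bar{\partial}_{(\tau)}(p)=0$.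
   Context: $\mathcal{A}_\theta$ is the unital $*$-algebra of series $a=\sum_{(m,n)\in\mathbb{Z}^2}a_{mn}U_1^mU_2^n$ with $(a_{mn})$ a complex Schwartz (rapidly decreasing) sequence on $\mathbb{Z}^2$, where $U_1,U_2$ are unitaries with $U_2U_1=e^{2\pi i\theta}U_1U_2$. The integral $\int:\mathcal{A}_\theta\to\mathbb{C}$ denotes the normalized positive faithful trace $\int\sum a_{mn}U_1^mU_2^n:=a_{00}$. The derivations $\partial_1,\partial_2$ of $\mathcal{A}_\theta$ are defined by $\partial_\mu(U_\nu)=2\pi i\,\delta_\mu^\nu U_\nu$ ($\mu,\nu=1,2$), extended by the Leibniz rule and linearity. The metric associated with $\tau$ is $g=(g_{\mu\nu})=\begin{pmatrix}1&\Re\tau\\ \Re\tau&|\tau|^2\end{pmatrix}$, with inverse $(g^{\mu\nu})=\frac{1}{(\Im\tau)^2}\begin{pmatrix}|\tau|^2&-\Re\tau\\-\Re\tau&1\end{pmatrix}$ and $\sqrt{\det g}=\Im\tau$; repeated indices are summed over $1,2$. The derivations $\partial_{(\tau)}=\frac{1}{\tau-\bar\tau}(-\bar\tau\partial_1+\partial_2)$ and $\bar\partial_{(\tau)}=\frac{1}{\tau-\bar\tau}(\tau\partial_1-\partial_2)$. *)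

From Stdlib Require Import Reals ZArith List.
From Coquelicot Require Import Coquelicot.
Open Scope R_scope.

(** Elements of the smooth noncommutative torus A_theta are represented by
    their coefficient sequences a : Z -> Z -> C, a = sum a m n U1^m U2^n. *)
Definition coefs := Z -> Z -> C.

Definition schwartz (a : coefs) : Prop :=
  forall k : nat, exists M : R, forall m n : Z,
    (1 + Rabs (IZR m) + Rabs (IZR n)) ^ k * Cmod (a m n) <= M.

Definition cexpi (t : R) : C := (cos t, sin t).

Definition sumZ (N : nat) (f : Z -> C) : C :=
  fold_right Cplus (RtoC 0)
    (map (fun j => f (Z.of_nat j - Z.of_nat N)%Z) (seq 0 (2 * N + 1))).

Definition CLim (u : nat -> C) : C :=
  (real (Lim_seq (fun N => Re (u N))), real (Lim_seq (fun N => Im (u N)))).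

(** Sum over Z^2 (limit of partial sums over squares [-N,N]^2; the series
    that occur below are absolutely convergent). *)
Definition sumZ2 (f : Z -> Z -> C) : C :=
  CLim (fun N => sumZ N (fun k => sumZ N (fun l => f k l))).

(** Product in A_theta, from U2 U1 = e^{2 pi i theta} U1 U2:
    (a_{kl} U1^k U2^l)(b_{k'l'} U1^k' U2^l') = e^{2 pi i theta l k'} a b U1^{k+k'} U2^{l+l'}. *)
Definition nct_mul (theta : R) (a b : coefs) : coefs :=
  fun m n => sumZ2 (fun k l =>
    (a k l * b (m - k)%Z (n - l)%Z * cexpi (2 * PI * theta * IZR l * IZR (m - k)))%C).

(** Adjoint: (U1^m U2^n)^* = U2^{-n} U1^{-m} = e^{2 pi i theta m n} U1^{-m} U2^{-n}. *)
Definition nct_star (theta : R) (a : coefs) : coefs :=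
  fun m n => (Cconj (a (- m)%Z (- n)%Z) * cexpi (2 * PI * theta * IZR m * IZR n))%C.

Definition nct_add (a b : coefs) : coefs := fun m n => (a m n + b m n)%C.
Definition nct_sub (a b : coefs) : coefs := fun m n => (a m n - b m n)%C.
Definition nct_scal (c : C) (a : coefs) : coefs := fun m n => (c * a m n)%C.

(** Trace: int sum a_{mn} U1^m U2^n = a_{00}. *)
Definition nct_int (a : coefs) : C := a 0%Z 0%Z.

(** Derivations: d_mu (U_nu) = 2 pi i delta U_nu. *)
Definition d1 (a : coefs) : coefs := fun m n => (Ci * RtoC (2 * PI * IZR m) * a m n)%C.
Definition d2 (a : coefs) : coefs := fun m n => (Ci * RtoC (2 * PI * IZR n) * a m n)%C.
Definition dmu (mu : bool) : coefs -> coefs := if mu then d2 else d1. (* false = 1, true = 2 *)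

Definition is_projection (theta : R) (p : coefs) : Prop :=
  schwartz p /\ p = nct_mul theta p p /\ p = nct_star theta p.

Definition sqrt_det_g (tau : C) : R := Im tau.
Definition ginv (tau : C) (mu nu : bool) : R :=
  / (Im tau) ^ 2 *
  match mu, nu with
  | false, false => Cmod tau ^ 2
  | true, true => 1
  | _, _ => - Re tau
  end.

Definition S_tau (theta : R) (tau : C) (p : coefs) : C :=
  (RtoC (/ (2 * PI)) *
   fold_right Cplus (RtoC 0)
     (map (fun mn : bool * bool =>
             RtoC (sqrt_det_g tau * ginv tau (fst mn) (snd mn)) *
             nct_int (nct_mul theta (dmu (fst mn) p) (dmu (snd mn) p)))
          ((false, false) :: (false, true) :: (true, false) :: (true, true) :: nil)))%C.

Definition psi (theta : R) (p : coefs) : C :=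
  (- / (RtoC (2 * PI) * Ci) *
   nct_int (nct_mul theta p
     (nct_sub (nct_mul theta (d1 p) (d2 p)) (nct_mul theta (d2 p) (d1 p)))))%C.

Definition del_tau (tau : C) (a : coefs) : coefs :=
  nct_scal (/ (tau - Cconj tau))%C
    (nct_add (nct_scal (- Cconj tau)%C (d1 a)) (d2 a)).
Definition delbar_tau (tau : C) (a : coefs) : coefs :=
  nct_scal (/ (tau - Cconj tau))%C
    (nct_sub (nct_scal tau (d1 a)) (d2 a)).

Definition zero_coefs : coefs := fun _ _ => RtoC 0.

(* Let dbar = dbar_(tau), X1 = dbar(p) p and X2 = p dbar(p).  Since p is a projection, each
   d_mu p is self-adjoint and d_mu p = d_mu(p) p + p d_mu(p); with the trace property this turns
   int X1^* X1 and int X2^* X2 into the Hermitian form of the coefficients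
   (tau, -1) / (tau - conj tau) of dbar, evaluated on the matrix P_{mu nu} = int p d_mu(p) d_nu(p)
   and on its transpose, while S_(tau)(p) and psi(p) only involve P + P^T and P - P^T.
   An explicit computation gives
     int X1^* X1 + int X2^* X2 = c S_(tau)(p),   int X1^* X1 - int X2^* X2 = 2 c psi(p),
   with c = pi / (2 Im tau) > 0.  Both norms are nonnegative, hence S_(tau)(p) >= 2 |psi(p)|, with
   equality when X1 = 0 or X2 = 0; the equations involving d_(tau) reduce to these by taking
   adjoints, since d_(tau)(p)^* = dbar_(tau)(p).

   For families dominated by a multiple
   of the summable weight (1 + k^2)^-1 (1 + l^2)^-1 the tails are bounded uniformly, which gives
   linearity, translation invariance and Fubini, and hence that rapidly decreasing sequences form
   an associative *-algebra on which the trace is tracial and positive. *)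

From Pilot Require Import Defs.
From Stdlib Require Import Reals ZArith List Lia Lra FunctionalExtensionality.
From Coquelicot Require Import Coquelicot.
Open Scope R_scope.

(** * Partial sums over squares of Z^2 *)

Lemma fold_Cplus_app (l1 l2 : list C) :
  fold_right Cplus 0 (l1 ++ l2) = (fold_right Cplus 0 l1 + fold_right Cplus 0 l2)%C.
Proof. induction l1 as [|x l1 IH]; simpl; [ring | rewrite IH; ring]. Qed.

Lemma sumZ_0 f : sumZ 0 f = f 0%Z.
Proof. unfold sumZ. simpl. apply Cplus_0_r. Qed.

Lemma sumZ_S N f :
  sumZ (S N) f = (f (- Z.of_nat (S N))%Z + sumZ N f + f (Z.of_nat (S N)))%C.
Proof.
  unfold sumZ.
  replace (2 * S N + 1)%nat with (S (S (2 * N + 1))) by lia.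
  rewrite seq_S, map_app, fold_Cplus_app. cbn [seq map fold_right].
  rewrite <- seq_shift, map_map, Cplus_0_r.
  rewrite (map_ext (fun j => f (Z.of_nat (S j) - Z.of_nat (S N))%Z)
                   (fun j => f (Z.of_nat j - Z.of_nat N)%Z)) by (intros; f_equal; lia).
  repeat f_equal; lia.
Qed.

Lemma sumZ_ext N f g : (forall k, f k = g k) -> sumZ N f = sumZ N g.
Proof. intros H. unfold sumZ. f_equal. apply map_ext. intros; apply H. Qed.

Lemma sumZ_plus N f g : sumZ N (fun k => f k + g k)%C = (sumZ N f + sumZ N g)%C.
Proof. induction N as [|N IHN]; rewrite ?sumZ_0, ?sumZ_S; try rewrite IHN; ring. Qed.

Lemma sumZ_scal N c f : sumZ N (fun k => c * f k)%C = (c * sumZ N f)%C.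
Proof. induction N as [|N IHN]; rewrite ?sumZ_0, ?sumZ_S; try rewrite IHN; ring. Qed.

Lemma sumZ_zero N : sumZ N (fun _ => 0%C) = 0%C.
Proof. induction N as [|N IHN]; rewrite ?sumZ_0, ?sumZ_S; try rewrite IHN; ring. Qed.

Lemma sumZ_conj N f : Cconj (sumZ N f) = sumZ N (fun k => Cconj (f k)).
Proof.
  induction N as [|N IHN]; rewrite ?sumZ_0, ?sumZ_S; auto.
  rewrite !Cplus_conj, IHN. reflexivity.
Qed.

Lemma sumZ_opp N f : sumZ N (fun k => f (- k)%Z) = sumZ N f.
Proof.
  induction N as [|N IHN]; rewrite ?sumZ_0, ?sumZ_S; auto.
  rewrite IHN, Z.opp_involutive. ring.
Qed.

Lemma sumZ_shift1 N f :
  sumZ N (fun k => f (k + 1)%Z) = (sumZ N f - f (- Z.of_nat N)%Z + f (Z.of_nat N + 1)%Z)%C.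
Proof.
  induction N as [|N IHN]; rewrite ?sumZ_0, ?sumZ_S.
  - simpl. ring.
  - rewrite IHN.
    replace (- Z.of_nat (S N) + 1)%Z with (- Z.of_nat N)%Z by lia.
    replace (Z.of_nat (S N)) with (Z.of_nat N + 1)%Z by lia.
    ring.
Qed.

Lemma sumZ_swap N M (F : Z -> Z -> C) :
  sumZ N (fun k => sumZ M (F k)) = sumZ M (fun l => sumZ N (fun k => F k l)).
Proof.
  induction N as [|N IHN].
  - rewrite sumZ_0. apply sumZ_ext. intros; rewrite sumZ_0; auto.
  - rewrite sumZ_S, IHN, <- !sumZ_plus. apply sumZ_ext. intros; rewrite sumZ_S; auto.
Qed.

Definition sumZR (N : nat) (f : Z -> R) : R := Re (sumZ N (fun k => RtoC (f k))).

Lemma sumZR_0 f : sumZR 0 f = f 0%Z.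
Proof. unfold sumZR. rewrite sumZ_0. reflexivity. Qed.

Lemma sumZR_S N f : sumZR (S N) f = f (- Z.of_nat (S N))%Z + sumZR N f + f (Z.of_nat (S N)).
Proof. unfold sumZR. rewrite sumZ_S. reflexivity. Qed.

Lemma sumZR_ext N f g : (forall k, f k = g k) -> sumZR N f = sumZR N g.
Proof. intros H. unfold sumZR. f_equal. apply sumZ_ext. intros; rewrite H; auto. Qed.

Lemma sumZR_lin N a b f g :
  sumZR N (fun k => a * f k + b * g k) = a * sumZR N f + b * sumZR N g.
Proof. induction N as [|N IHN]; rewrite ?sumZR_0, ?sumZR_S; try rewrite IHN; ring. Qed.

Lemma sumZR_scal N c f : sumZR N (fun k => c * f k) = c * sumZR N f.
Proof.
  rewrite <- (Rplus_0_r (c * _)), <- (Rmult_0_l (sumZR N f)), <- sumZR_lin.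
  apply sumZR_ext. intros; ring.
Qed.

Lemma sumZR_le N f g : (forall k, f k <= g k) -> sumZR N f <= sumZR N g.
Proof.
  intros H. induction N as [|N IHN]; rewrite ?sumZR_0, ?sumZR_S; auto.
  specialize (H (- Z.of_nat (S N))%Z) as H1. specialize (H (Z.of_nat (S N))). lra.
Qed.

Lemma sumZR_nonneg N f : (forall k, 0 <= f k) -> 0 <= sumZR N f.
Proof.
  intros H. induction N as [|N IHN]; rewrite ?sumZR_0, ?sumZR_S; auto.
  specialize (H (- Z.of_nat (S N))%Z) as H1. specialize (H (Z.of_nat (S N))). lra.
Qed.

Lemma Re_sumZ N f : Re (sumZ N f) = sumZR N (fun k => Re (f k)).
Proof.
  induction N as [|N IHN]; rewrite ?sumZR_0, ?sumZR_S, ?sumZ_0, ?sumZ_S; auto.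
  rewrite <- IHN. reflexivity.
Qed.

Lemma Im_sumZ N f : Im (sumZ N f) = sumZR N (fun k => Im (f k)).
Proof.
  induction N as [|N IHN]; rewrite ?sumZR_0, ?sumZR_S, ?sumZ_0, ?sumZ_S; auto.
  rewrite <- IHN. reflexivity.
Qed.

Lemma Cmod_sumZ_le N f : Cmod (sumZ N f) <= sumZR N (fun k => Cmod (f k)).
Proof.
  induction N as [|N IHN]; rewrite ?sumZR_0, ?sumZR_S, ?sumZ_0, ?sumZ_S; [lra|].
  eapply Rle_trans; [apply Cmod_triangle|].
  pose proof (Cmod_triangle (f (- Z.of_nat (S N))%Z) (sumZ N f)). lra.
Qed.

Definition sqsum (N : nat) (F : Z -> Z -> C) : C := sumZ N (fun k => sumZ N (fun l => F k l)).
Definition sqsumR (N : nat) (g : Z -> Z -> R) : R := sumZR N (fun k => sumZR N (fun l => g k l)).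

Lemma sqsum_lin N a b F G :
  sqsum N (fun k l => a * F k l + b * G k l)%C = (a * sqsum N F + b * sqsum N G)%C.
Proof.
  unfold sqsum. rewrite <- !sumZ_scal, <- sumZ_plus. apply sumZ_ext. intros k.
  rewrite <- !sumZ_scal, <- sumZ_plus. reflexivity.
Qed.

Lemma Re_sqsum N F : Re (sqsum N F) = sqsumR N (fun k l => Re (F k l)).
Proof. unfold sqsum, sqsumR. rewrite Re_sumZ. apply sumZR_ext. intros; apply Re_sumZ. Qed.

Lemma Im_sqsum N F : Im (sqsum N F) = sqsumR N (fun k l => Im (F k l)).
Proof. unfold sqsum, sqsumR. rewrite Im_sumZ. apply sumZR_ext. intros; apply Im_sumZ. Qed.

Lemma sqsumR_ext N f g : (forall k l, f k l = g k l) -> sqsumR N f = sqsumR N g.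
Proof. intros H. apply sumZR_ext. intros; apply sumZR_ext; auto. Qed.

Lemma sqsumR_lin N a b f g :
  sqsumR N (fun k l => a * f k l + b * g k l) = a * sqsumR N f + b * sqsumR N g.
Proof.
  unfold sqsumR. rewrite <- sumZR_lin. apply sumZR_ext. intros; apply sumZR_lin.
Qed.

Lemma sqsumR_scal N c f : sqsumR N (fun k l => c * f k l) = c * sqsumR N f.
Proof. unfold sqsumR. rewrite <- sumZR_scal. apply sumZR_ext. intros; apply sumZR_scal. Qed.

Lemma sqsumR_le N f g : (forall k l, f k l <= g k l) -> sqsumR N f <= sqsumR N g.
Proof. intros H. apply sumZR_le. intros; apply sumZR_le; auto. Qed.

Lemma sqsumR_nonneg N f : (forall k l, 0 <= f k l) -> 0 <= sqsumR N f.
Proof. intros H. apply sumZR_nonneg. intros; apply sumZR_nonneg; auto. Qed.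

Lemma sqsumR_le_S N f : (forall k l, 0 <= f k l) -> sqsumR N f <= sqsumR (S N) f.
Proof.
  intros H. unfold sqsumR.
  apply Rle_trans with (sumZR (S N) (fun k => sumZR N (fun l => f k l))).
  - rewrite sumZR_S.
    pose proof (sumZR_nonneg N (fun l => f (- Z.of_nat (S N))%Z l) (H _)).
    pose proof (sumZR_nonneg N (fun l => f (Z.of_nat (S N)) l) (H _)). lra.
  - apply sumZR_le. intros k. rewrite (sumZR_S N).
    pose proof (H k (- Z.of_nat (S N))%Z). pose proof (H k (Z.of_nat (S N))). lra.
Qed.

Lemma Cmod_sqsum_le N F : Cmod (sqsum N F) <= sqsumR N (fun k l => Cmod (F k l)).
Proof.
  eapply Rle_trans; [apply Cmod_sumZ_le|]. apply sumZR_le. intros; apply Cmod_sumZ_le.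
Qed.

Lemma sqsum_swap4 N (F : Z -> Z -> Z -> Z -> C) :
  sqsum N (fun k l => sqsum N (F k l)) = sqsum N (fun k' l' => sqsum N (fun k l => F k l k' l')).
Proof.
  unfold sqsum.
  transitivity (sumZ N (fun k => sumZ N (fun k' => sumZ N (fun l => sumZ N (F k l k'))))).
  { apply sumZ_ext; intros k. apply sumZ_swap. }
  rewrite sumZ_swap. apply sumZ_ext; intros k'.
  transitivity (sumZ N (fun k => sumZ N (fun l' => sumZ N (fun l => F k l k' l')))).
  { apply sumZ_ext; intros k. apply sumZ_swap. }
  apply sumZ_swap.
Qed.

(** * Series dominated by a summable weight *)

Definition weight1 (k : Z) : R := / (1 + IZR k ^ 2).
Definition weight (k l : Z) : R := weight1 k * weight1 l.

Lemma weight1_pos k : 0 < weight1 k.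
Proof. unfold weight1. apply Rinv_0_lt_compat. nra. Qed.

Lemma weight1_le_1 k : weight1 k <= 1.
Proof. unfold weight1. rewrite <- Rinv_1. apply Rinv_le_contravar; nra. Qed.

Lemma weight1_opp k : weight1 (- k) = weight1 k.
Proof. unfold weight1. rewrite opp_IZR. f_equal. ring. Qed.

Lemma weight1_peetre a b : weight1 a * weight1 b <= 2 * weight1 (a + b).
Proof.
  unfold weight1. rewrite plus_IZR, <- Rinv_mult.
  set (x := IZR a). set (y := IZR b).
  pose proof (pow2_ge_0 x). pose proof (pow2_ge_0 y). pose proof (pow2_ge_0 (x + y)).
  replace (2 * / (1 + (x + y) ^ 2)) with (/ ((1 + (x + y) ^ 2) / 2)) by (field; lra).
  apply Rinv_le_contravar; [nra|].
  pose proof (pow2_ge_0 (x - y)). pose proof (pow2_ge_0 (x * y)). nra.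
Qed.

Lemma weight1_shift_le k a : weight1 (k + a) <= 2 * (1 + IZR a ^ 2) * weight1 k.
Proof.
  pose proof (weight1_peetre (k + a) (- a)) as H.
  replace (k + a + - a)%Z with k in H by ring.
  rewrite weight1_opp in H. unfold weight1 in *.
  assert (0 < 1 + IZR a ^ 2) by nra.
  apply (Rmult_le_compat_l (1 + IZR a ^ 2)) in H; [|lra].
  rewrite Rmult_comm, Rmult_assoc, Rinv_l, Rmult_1_r in H by lra. lra.
Qed.

Lemma Rabs_IZR_weight1_le k : Rabs (IZR k) * weight1 k <= 1.
Proof.
  unfold weight1. assert (0 < 1 + IZR k ^ 2) by nra.
  apply (Rmult_le_reg_r (1 + IZR k ^ 2)); [lra|].
  rewrite Rmult_assoc, Rinv_l, Rmult_1_r, Rmult_1_l by lra.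
  rewrite <- pow2_abs. pose proof (Rabs_pos (IZR k)). nra.
Qed.

Lemma weight_pos k l : 0 < weight k l.
Proof. apply Rmult_lt_0_compat; apply weight1_pos. Qed.

Lemma weight_opp k l : weight (- k) (- l) = weight k l.
Proof. unfold weight. rewrite !weight1_opp. reflexivity. Qed.

Lemma weight_peetre k l m n : weight k l * weight (m - k) (n - l) <= 4 * weight m n.
Proof.
  unfold weight.
  pose proof (weight1_peetre k (m - k)). pose proof (weight1_peetre l (n - l)).
  replace (k + (m - k))%Z with m in * by ring. replace (l + (n - l))%Z with n in * by ring.
  pose proof (weight1_pos k). pose proof (weight1_pos l).
  pose proof (weight1_pos (m - k)). pose proof (weight1_pos (n - l)).
  replace (4 * (weight1 m * weight1 n)) with ((2 * weight1 m) * (2 * weight1 n)) by ring.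
  replace (weight1 k * weight1 l * (weight1 (m - k) * weight1 (n - l)))
    with ((weight1 k * weight1 (m - k)) * (weight1 l * weight1 (n - l))) by ring.
  apply Rmult_le_compat; nra.
Qed.

Lemma sumZR_weight1_le N : sumZR N weight1 <= 5 - 4 / (INR N + 1).
Proof.
  induction N as [|N IHN].
  - rewrite sumZR_0. unfold weight1. simpl. rewrite Rmult_0_l, Rplus_0_r, Rplus_0_l, Rinv_1. lra.
  - rewrite sumZR_S, weight1_opp.
    unfold weight1 at 1 3. rewrite <- INR_IZR_INZ, S_INR.
    set (m := INR N + 1) in *.
    assert (1 <= m) by (pose proof (pos_INR N); unfold m; lra).
    (* [2 / (1 + m^2) <= 4 / m - 4 / (m + 1)] telescopes *)
    assert (2 / (1 + m ^ 2) <= 4 / m - 4 / (m + 1)).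
    { apply Rminus_le_0.
      replace (4 / m - 4 / (m + 1) - 2 / (1 + m ^ 2))
        with (2 * (m ^ 2 - m + 2) / (m * (m + 1) * (1 + m ^ 2))) by (field; split; nra).
      apply Rdiv_le_0_compat; [nra|]. apply Rmult_lt_0_compat; nra. }
    unfold Rdiv in *. lra.
Qed.

Lemma sqsumR_weight_le N : sqsumR N weight <= 25.
Proof.
  unfold sqsumR, weight.
  rewrite (sumZR_ext N _ (fun k => sumZR N weight1 * weight1 k))
    by (intros; rewrite sumZR_scal; ring).
  rewrite sumZR_scal.
  pose proof (sumZR_weight1_le N).
  pose proof (sumZR_nonneg N weight1 (fun k => Rlt_le _ _ (weight1_pos k))).
  assert (0 < 4 / (INR N + 1)).
  { apply Rdiv_lt_0_compat; [lra|]. pose proof (pos_INR N). lra. }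
  nra.
Qed.

Lemma sqsumR_weight_incr N : sqsumR N weight <= sqsumR (S N) weight.
Proof. apply sqsumR_le_S. intros; apply Rlt_le, weight_pos. Qed.

Definition weight_total : R := real (Lim_seq (fun N => sqsumR N weight)).

Lemma is_lim_seq_weight_total : is_lim_seq (fun N => sqsumR N weight) weight_total.
Proof.
  destruct (ex_finite_lim_seq_incr _ 25 sqsumR_weight_incr sqsumR_weight_le) as [l Hl].
  unfold weight_total. rewrite (is_lim_seq_unique _ _ Hl). exact Hl.
Qed.

Lemma sqsumR_weight_le_total N : sqsumR N weight <= weight_total.
Proof.
  apply (is_lim_seq_incr_compare (fun N => sqsumR N weight));
    [apply is_lim_seq_weight_total | apply sqsumR_weight_incr].
Qed.

Lemma weight_total_le : weight_total <= 25.
Proof.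
  apply (is_lim_seq_le _ _ _ _ sqsumR_weight_le is_lim_seq_weight_total (is_lim_seq_const 25)).
Qed.

Definition dominated (C0 : R) (F : Z -> Z -> C) : Prop :=
  forall k l, Cmod (F k l) <= C0 * weight k l.

Lemma dominated_nonneg C0 F : dominated C0 F -> 0 <= C0.
Proof.
  intros H. specialize (H 0%Z 0%Z). pose proof (Cmod_ge_0 (F 0%Z 0%Z)).
  pose proof (weight_pos 0 0). destruct (Rle_lt_dec 0 C0); nra.
Qed.

Lemma nonneg_sqsumR_lim (h : Z -> Z -> R) B :
  (forall k l, 0 <= h k l) -> (forall N, sqsumR N h <= B) ->
  exists L : R, is_lim_seq (fun N => sqsumR N h) L /\ forall N, sqsumR N h <= L.
Proof.
  intros Hh HB.
  assert (Hincr : forall N, sqsumR N h <= sqsumR (S N) h) by (intros; apply sqsumR_le_S, Hh).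
  destruct (ex_finite_lim_seq_incr _ B Hincr HB) as [L HL].
  exists L. split; auto. intros N. apply (is_lim_seq_incr_compare (fun N => sqsumR N h)); auto.
Qed.

(* [g] is split as the half-difference of the nonnegative families [C0 weight +/- g],
   whose partial sums increase to limits adding up to [2 C0 weight_total]. *)
Lemma dominated_sqsumR_tail (g : Z -> Z -> R) C0 :
  (forall k l, Rabs (g k l) <= C0 * weight k l) ->
  exists L : R, is_lim_seq (fun N => sqsumR N g) L /\
    forall N, Rabs (L - sqsumR N g) <= C0 * (weight_total - sqsumR N weight).
Proof.
  intros Hg.
  assert (Hb : forall k l, - (C0 * weight k l) <= g k l <= C0 * weight k l)
    by (intros; apply Rabs_le_between, Hg).
  set (hp := fun k l => 1 * (C0 * weight k l) + 1 * g k l).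
  set (hm := fun k l => 1 * (C0 * weight k l) + (-1) * g k l).
  assert (Hsum : forall N, sqsumR N hp + sqsumR N hm = 2 * C0 * sqsumR N weight).
  { intros N. unfold hp, hm. rewrite !sqsumR_lin, sqsumR_scal. ring. }
  assert (Hdiff : forall N, sqsumR N g = / 2 * sqsumR N hp + (- / 2) * sqsumR N hm).
  { intros N. rewrite <- sqsumR_lin. apply sqsumR_ext. intros; unfold hp, hm. field. }
  assert (Hbound : forall N (h : Z -> Z -> R), (forall k l, h k l <= 2 * C0 * weight k l) ->
                     sqsumR N h <= 2 * C0 * 25).
  { intros N h Hh. eapply Rle_trans; [apply (sqsumR_le N h (fun k l => 2 * C0 * weight k l)), Hh|].
    rewrite sqsumR_scal. pose proof (sqsumR_weight_le N).
    pose proof (Rle_trans _ _ _ (Rabs_pos _) (Hg 0%Z 0%Z)) as H0.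
    pose proof (weight_pos 0 0). assert (0 <= C0) by nra. nra. }
  destruct (nonneg_sqsumR_lim hp (2 * C0 * 25)) as [Lp [HLp Hp]].
  { intros k l. unfold hp. specialize (Hb k l). lra. }
  { intros N. apply Hbound. intros k l. unfold hp. specialize (Hb k l). lra. }
  destruct (nonneg_sqsumR_lim hm (2 * C0 * 25)) as [Lm [HLm Hm]].
  { intros k l. unfold hm. specialize (Hb k l). lra. }
  { intros N. apply Hbound. intros k l. unfold hm. specialize (Hb k l). lra. }
  assert (HL : Lp + Lm = 2 * C0 * weight_total).
  { assert (H1 := is_lim_seq_plus' _ _ _ _ HLp HLm).
    assert (H2 := is_lim_seq_scal_l _ (2 * C0) _ is_lim_seq_weight_total).
    eapply is_lim_seq_ext in H2; [|intros N; symmetry; apply Hsum].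
    apply is_lim_seq_unique in H1, H2. rewrite H1 in H2. injection H2; auto. }
  exists (/ 2 * Lp + - / 2 * Lm). split.
  - eapply is_lim_seq_ext; [intros N; symmetry; apply Hdiff|].
    apply is_lim_seq_plus'; apply (is_lim_seq_scal_l _ _ (Finite _)); auto.
  - intros N. rewrite Hdiff. specialize (Hp N). specialize (Hm N). specialize (Hsum N).
    apply Rabs_le. nra.
Qed.

Definition is_lim_C (u : nat -> C) (z : C) : Prop :=
  is_lim_seq (fun N => Re (u N)) (Re z) /\ is_lim_seq (fun N => Im (u N)) (Im z).

Lemma is_lim_C_unique u z z' : is_lim_C u z -> is_lim_C u z' -> z = z'.
Proof.
  intros [H1 H2] [H3 H4].
  apply is_lim_seq_unique in H1, H2, H3, H4.
  rewrite H1 in H3. rewrite H2 in H4. injection H3; injection H4; intros.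
  apply injective_projections; auto.
Qed.

Lemma is_lim_C_ext u v z : (forall N, u N = v N) -> is_lim_C u z -> is_lim_C v z.
Proof. intros E [H1 H2]. split; eapply is_lim_seq_ext; eauto; intros; simpl; rewrite E; auto. Qed.

Lemma is_lim_C_lin u v z z' a b : is_lim_C u z -> is_lim_C v z' ->
  is_lim_C (fun N => a * u N + b * v N)%C (a * z + b * z')%C.
Proof.
  intros [H1 H2] [H3 H4].
  pose proof (fun x => is_lim_seq_scal_l _ x _ H1) as H1'.
  pose proof (fun x => is_lim_seq_scal_l _ x _ H2) as H2'.
  pose proof (fun x => is_lim_seq_scal_l _ x _ H3) as H3'.
  pose proof (fun x => is_lim_seq_scal_l _ x _ H4) as H4'.
  split.
  - eapply is_lim_seq_ext; [|apply (is_lim_seq_plus' _ _ _ _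
      (is_lim_seq_minus' _ _ _ _ (H1' (Re a)) (H2' (Im a)))
      (is_lim_seq_minus' _ _ _ _ (H3' (Re b)) (H4' (Im b))))].
    intros; unfold Re, Im; simpl; ring.
  - eapply is_lim_seq_ext; [|apply (is_lim_seq_plus' _ _ _ _
      (is_lim_seq_plus' _ _ _ _ (H2' (Re a)) (H1' (Im a)))
      (is_lim_seq_plus' _ _ _ _ (H4' (Re b)) (H3' (Im b))))].
    intros; unfold Re, Im; simpl; ring.
Qed.

Lemma is_lim_C_conj u z : is_lim_C u z -> is_lim_C (fun N => Cconj (u N)) (Cconj z).
Proof.
  intros [H1 H2]. split; auto.
  apply is_lim_seq_opp in H2. simpl in H2. rewrite im_conj.
  eapply is_lim_seq_ext; [|exact H2]. intros; rewrite im_conj; reflexivity.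
Qed.

Lemma im_le_Cmod (c : C) : Rabs (Im c) <= Cmod c.
Proof.
  destruct c as [x y]. unfold Cmod, Im; simpl.
  rewrite <- sqrt_Rsqr_abs. apply sqrt_le_1_alt. unfold Rsqr. nra.
Qed.

Lemma Cmod_le_Re_Im (c : C) : Cmod c <= Rabs (Re c) + Rabs (Im c).
Proof.
  destruct c as [x y]. unfold Cmod, Re, Im; simpl.
  pose proof (Rabs_pos x). pose proof (Rabs_pos y).
  rewrite <- (sqrt_Rsqr (Rabs x + Rabs y)) by lra.
  apply sqrt_le_1_alt. rewrite !Rmult_1_r. fold (Rsqr x) (Rsqr y).
  rewrite (Rsqr_abs x), (Rsqr_abs y). unfold Rsqr. nra.
Qed.

Lemma is_lim_C_0 (u : nat -> C) (g : nat -> R) :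
  is_lim_seq g 0 -> (forall N, Cmod (u N) <= g N) -> is_lim_C u 0.
Proof.
  intros Hg Hu.
  assert (Hg' : is_lim_seq (fun N => - g N) 0).
  { apply is_lim_seq_opp in Hg. simpl in Hg. rewrite Ropp_0 in Hg. exact Hg. }
  split; apply is_lim_seq_le_le with (fun N => - g N) g; auto; intros N; apply Rabs_le_between;
    eapply Rle_trans; [apply re_le_Cmod | apply Hu | apply im_le_Cmod | apply Hu ].
Qed.

Lemma sumZ2_spec C0 F : dominated C0 F ->
  is_lim_C (fun N => sqsum N F) (sumZ2 F) /\
  forall N, Cmod (sumZ2 F - sqsum N F) <= 2 * C0 * (weight_total - sqsumR N weight).
Proof.
  intros HF.
  destruct (dominated_sqsumR_tail (fun k l => Re (F k l)) C0) as [Lr [Hr Tr]].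
  { intros k l. eapply Rle_trans; [apply re_le_Cmod | apply HF]. }
  destruct (dominated_sqsumR_tail (fun k l => Im (F k l)) C0) as [Li [Hi Ti]].
  { intros k l. eapply Rle_trans; [apply im_le_Cmod | apply HF]. }
  apply (is_lim_seq_ext _ (fun N => Re (sqsum N F))) in Hr; [|intros; symmetry; apply Re_sqsum].
  apply (is_lim_seq_ext _ (fun N => Im (sqsum N F))) in Hi; [|intros; symmetry; apply Im_sqsum].
  assert (E : sumZ2 F = (Lr, Li)).
  { change (sumZ2 F) with (CLim (fun N => sqsum N F)). unfold CLim.
    rewrite (is_lim_seq_unique _ _ Hr), (is_lim_seq_unique _ _ Hi). reflexivity. }
  rewrite E. split; [split; assumption|].
  intros N. eapply Rle_trans; [apply Cmod_le_Re_Im|].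
  specialize (Tr N). specialize (Ti N). rewrite <- Re_sqsum in Tr. rewrite <- Im_sqsum in Ti.
  unfold Re, Im in *. simpl in *. unfold Rminus in *. lra.
Qed.

Lemma is_lim_C_sumZ2 C0 F : dominated C0 F -> is_lim_C (fun N => sqsum N F) (sumZ2 F).
Proof. intros H. apply (sumZ2_spec C0 F H). Qed.

Lemma sumZ2_tail_le C0 F N : dominated C0 F ->
  Cmod (sumZ2 F - sqsum N F) <= 2 * C0 * (weight_total - sqsumR N weight).
Proof. intros H. apply (sumZ2_spec C0 F H). Qed.

Lemma Cmod_sumZ2_le C0 F : dominated C0 F -> Cmod (sumZ2 F) <= 50 * C0.
Proof.
  intros HF. pose proof (sumZ2_tail_le C0 F 0 HF) as T. pose proof (dominated_nonneg _ _ HF).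
  unfold sqsum, sqsumR in T. rewrite sumZ_0, sumZR_0, sumZ_0, sumZR_0 in T.
  pose proof (Cmod_triangle (sumZ2 F - F 0%Z 0%Z) (F 0%Z 0%Z)) as Tri.
  replace (sumZ2 F - F 0%Z 0%Z + F 0%Z 0%Z)%C with (sumZ2 F) in Tri by ring.
  pose proof (HF 0%Z 0%Z). pose proof (weight_pos 0 0). pose proof weight_total_le.
  assert (weight 0 0 <= 1)
    by (unfold weight, weight1; simpl; rewrite Rmult_0_l, Rplus_0_r, Rinv_1; lra).
  nra.
Qed.

Lemma sumZ2_ext F G : (forall k l, F k l = G k l) -> sumZ2 F = sumZ2 G.
Proof.
  intros H. replace G with F; auto.
  apply functional_extensionality; intros k. apply functional_extensionality; auto.
Qed.

Lemma dominated_lin C1 C2 F G a b : dominated C1 F -> dominated C2 G ->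
  dominated (Cmod a * C1 + Cmod b * C2) (fun k l => a * F k l + b * G k l)%C.
Proof.
  intros HF HG k l. eapply Rle_trans; [apply Cmod_triangle|]. rewrite !Cmod_mult.
  pose proof (HF k l). pose proof (HG k l). pose proof (Cmod_ge_0 a). pose proof (Cmod_ge_0 b).
  nra.
Qed.

Lemma sumZ2_lin C1 C2 F G a b : dominated C1 F -> dominated C2 G ->
  sumZ2 (fun k l => a * F k l + b * G k l)%C = (a * sumZ2 F + b * sumZ2 G)%C.
Proof.
  intros HF HG.
  apply (is_lim_C_unique (fun N => sqsum N (fun k l => a * F k l + b * G k l)%C)).
  - eapply is_lim_C_sumZ2, dominated_lin; eauto.
  - eapply is_lim_C_ext; [intros; symmetry; apply sqsum_lin|].
    apply is_lim_C_lin; eapply is_lim_C_sumZ2; eauto.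
Qed.

Lemma sumZ2_scal C0 F a : dominated C0 F -> sumZ2 (fun k l => a * F k l)%C = (a * sumZ2 F)%C.
Proof.
  intros HF. rewrite <- (Cplus_0_r (a * sumZ2 F)), <- (Cmult_0_l (sumZ2 F)).
  rewrite <- (sumZ2_lin C0 C0) by auto. apply sumZ2_ext; intros; ring.
Qed.

Lemma sumZ2_scal_r C0 F a : dominated C0 F -> sumZ2 (fun k l => F k l * a)%C = (sumZ2 F * a)%C.
Proof.
  intros HF. rewrite Cmult_comm, <- (sumZ2_scal C0) by auto. apply sumZ2_ext; intros; ring.
Qed.

Lemma sumZ2_conj C0 F : dominated C0 F -> Cconj (sumZ2 F) = sumZ2 (fun k l => Cconj (F k l)).
Proof.
  intros HF. apply (is_lim_C_unique (fun N => Cconj (sqsum N F))).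
  - apply is_lim_C_conj. eapply is_lim_C_sumZ2; eauto.
  - eapply is_lim_C_ext.
    2: { apply (is_lim_C_sumZ2 C0). intros k l. rewrite Cmod_conj. apply HF. }
    intros N. unfold sqsum. rewrite sumZ_conj. apply sumZ_ext. intros. symmetry. apply sumZ_conj.
Qed.

Lemma sumZ2_zero : sumZ2 (fun _ _ => 0%C) = 0%C.
Proof.
  apply (is_lim_C_unique (fun N => sqsum N (fun _ _ => 0%C))).
  - apply (is_lim_C_sumZ2 0). intros k l. rewrite Cmod_0, Rmult_0_l. lra.
  - eapply (is_lim_C_ext (fun _ => 0%C)); [|split; apply is_lim_seq_const].
    intros N. unfold sqsum. rewrite (sumZ_ext N _ (fun _ => 0%C)) by (intros; apply sumZ_zero).
    symmetry. apply sumZ_zero.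
Qed.

Lemma sumZ2_transpose F : sumZ2 (fun k l => F l k) = sumZ2 F.
Proof. unfold sumZ2. f_equal. apply functional_extensionality. intros N. apply sumZ_swap. Qed.

Lemma sumZ2_opp F : sumZ2 (fun k l => F (- k)%Z (- l)%Z) = sumZ2 F.
Proof.
  unfold sumZ2. f_equal. apply functional_extensionality. intros N.
  rewrite <- (sumZ_opp N (fun k => sumZ N (fun l => F k l))). apply sumZ_ext. intros k.
  apply (sumZ_opp N (fun l => F (- k)%Z l)).
Qed.

Lemma dominated_shift_l C0 F a : dominated C0 F ->
  dominated (2 * (1 + IZR a ^ 2) * C0) (fun k l => F (k + a)%Z l).
Proof.
  intros HF k l. eapply Rle_trans; [apply HF|]. pose proof (dominated_nonneg _ _ HF).
  unfold weight. pose proof (weight1_shift_le k a). pose proof (weight1_pos l).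
  replace (2 * (1 + IZR a ^ 2) * C0 * (weight1 k * weight1 l))
    with (C0 * ((2 * (1 + IZR a ^ 2) * weight1 k) * weight1 l)) by ring.
  apply Rmult_le_compat_l; [assumption|]. apply Rmult_le_compat_r; lra.
Qed.

Lemma dominated_transpose C0 F : dominated C0 F -> dominated C0 (fun k l => F l k).
Proof. intros HF k l. unfold weight. rewrite (Rmult_comm (weight1 k)). apply HF. Qed.

Lemma is_lim_seq_weight1 : is_lim_seq (fun N => weight1 (Z.of_nat N)) 0.
Proof.
  assert (H : is_lim_seq (fun N => 1 + INR N ^ 2) p_infty).
  { apply is_lim_seq_le_p_loc with INR; [|apply is_lim_seq_INR].
    exists 0%nat. intros n _. pose proof (pos_INR n). nra. }
  apply is_lim_seq_inv in H; [|discriminate].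
  eapply is_lim_seq_ext; [|exact H]. intros n. unfold weight1. rewrite <- INR_IZR_INZ. reflexivity.
Qed.

Lemma Cmod_sumZ_row_le C0 F N j : dominated C0 F ->
  Cmod (sumZ N (fun l => F j l)) <= 5 * C0 * weight1 j.
Proof.
  intros HF. eapply Rle_trans; [apply Cmod_sumZ_le|].
  apply Rle_trans with (sumZR N (fun l => (C0 * weight1 j) * weight1 l)).
  - apply sumZR_le. intros l. rewrite Rmult_assoc. apply HF.
  - rewrite sumZR_scal. pose proof (sumZR_weight1_le N). pose proof (dominated_nonneg _ _ HF).
    pose proof (weight1_pos j).
    assert (0 < 4 / (INR N + 1)) by (apply Rdiv_lt_0_compat; pose proof (pos_INR N); lra).
    replace (5 * C0 * weight1 j) with (C0 * weight1 j * 5) by ring.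
    apply Rmult_le_compat_l; [apply Rmult_le_pos|]; lra.
Qed.

(* Shifting the square [-N, N]^2 by one step changes the partial sum by two boundary rows,
   which vanish in the limit. *)
Lemma sumZ2_shift1 C0 F : dominated C0 F -> sumZ2 (fun k l => F (k + 1)%Z l) = sumZ2 F.
Proof.
  intros HF.
  apply (is_lim_C_unique (fun N => sqsum N (fun k l => F (k + 1)%Z l))).
  { eapply is_lim_C_sumZ2, dominated_shift_l, HF. }
  rewrite <- (Cplus_0_r (sumZ2 F)), <- (Cmult_1_l (sumZ2 F)), <- (Cmult_1_l 0).
  apply (is_lim_C_ext (fun N => 1 * sqsum N F +
           1 * (- sumZ N (fun l => F (- Z.of_nat N)%Z l) +
                sumZ N (fun l => F (Z.of_nat (S N)) l)))%C).
  { intros N. unfold sqsum. rewrite (sumZ_shift1 N (fun k => sumZ N (fun l => F k l))).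
    rewrite Nat2Z.inj_succ, <- Z.add_1_r. ring. }
  apply is_lim_C_lin; [eapply is_lim_C_sumZ2, HF|].
  apply is_lim_C_0 with
    (fun N => 5 * C0 * weight1 (Z.of_nat N) + 5 * C0 * weight1 (Z.of_nat (S N))).
  - replace 0 with (5 * C0 * 0 + 5 * C0 * 0) by ring.
    apply is_lim_seq_plus'; apply (is_lim_seq_scal_l _ (5 * C0) 0);
      [|apply (is_lim_seq_incr_1 (fun N => weight1 (Z.of_nat N)))]; apply is_lim_seq_weight1.
  - intros N. eapply Rle_trans; [apply Cmod_triangle|]. rewrite Cmod_opp.
    pose proof (Cmod_sumZ_row_le C0 F N (- Z.of_nat N)%Z HF).
    pose proof (Cmod_sumZ_row_le C0 F N (Z.of_nat (S N)) HF).
    rewrite weight1_opp in *. lra.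
Qed.

Lemma sumZ2_shift_l C0 F a : dominated C0 F -> sumZ2 (fun k l => F (k + a)%Z l) = sumZ2 F.
Proof.
  assert (Hnat : forall n C0 F, dominated C0 F ->
            sumZ2 (fun k l => F (k + Z.of_nat n)%Z l) = sumZ2 F).
  { induction n as [|n IH]; intros C1 G HG.
    - apply sumZ2_ext. intros; rewrite Z.add_0_r; reflexivity.
    - rewrite <- (IH _ _ HG), <- (sumZ2_shift1 _ _ (dominated_shift_l _ _ (Z.of_nat n) HG)).
      apply sumZ2_ext. intros k l. f_equal. lia. }
  intros HF. destruct (Z_le_gt_dec 0 a) as [Ha|Ha].
  - replace a with (Z.of_nat (Z.to_nat a)) by lia. eapply Hnat; eauto.
  - rewrite <- (Hnat (Z.to_nat (- a)) _ _ (dominated_shift_l _ _ a HF)).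
    symmetry. apply sumZ2_ext. intros k l. f_equal. lia.
Qed.

Lemma sumZ2_shift C0 F a b : dominated C0 F ->
  sumZ2 (fun k l => F (k + a)%Z (l + b)%Z) = sumZ2 F.
Proof.
  intros HF. rewrite <- (sumZ2_shift_l C0 F a HF), <- sumZ2_transpose.
  rewrite <- (sumZ2_transpose (fun k l => F (k + a)%Z l)).
  apply (sumZ2_shift_l (2 * (1 + IZR a ^ 2) * C0) (fun k l => F (l + a)%Z k) b).
  apply dominated_transpose, (dominated_shift_l _ _ a HF).
Qed.

Definition dominated2 (C0 : R) (F : Z -> Z -> Z -> Z -> C) : Prop :=
  forall k l k' l', Cmod (F k l k' l') <= C0 * weight k l * weight k' l'.

(* The inner tails are bounded uniformly by [2 C0 (weight_total - sqsumR N weight) weight k l]. *)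
Lemma is_lim_C_sumZ2_iterated C0 F : dominated2 C0 F ->
  is_lim_C (fun N => sqsum N (fun k l => sqsum N (F k l))) (sumZ2 (fun k l => sumZ2 (F k l))).
Proof.
  intros HF.
  assert (HFkl : forall k l, dominated (C0 * weight k l) (F k l)) by (intros k l k' l'; apply HF).
  assert (HC : 0 <= C0).
  { pose proof (dominated_nonneg _ _ (HFkl 0%Z 0%Z)). pose proof (weight_pos 0 0). nra. }
  set (h := fun k l => sumZ2 (F k l)).
  assert (Hh : dominated (50 * C0) h).
  { intros k l. rewrite Rmult_assoc. apply (Cmod_sumZ2_le _ _ (HFkl k l)). }
  set (t := fun N => weight_total - sqsumR N weight).
  rewrite <- (Cplus_0_r (sumZ2 h)), <- (Cmult_1_l (sumZ2 h)).
  rewrite <- (Cmult_0_r (-1)).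
  apply (is_lim_C_ext (fun N => 1 * sqsum N h +
           (-1) * sqsum N (fun k l => h k l - sqsum N (F k l)))%C).
  { intros N. rewrite <- sqsum_lin.
    unfold sqsum. apply sumZ_ext; intros k. apply sumZ_ext; intros l. ring. }
  apply is_lim_C_lin; [apply (is_lim_C_sumZ2 _ _ Hh)|].
  apply is_lim_C_0 with (fun N => 2 * C0 * t N * 25).
  - assert (Ht : is_lim_seq t 0).
    { unfold t. rewrite <- (Rminus_diag weight_total).
      apply is_lim_seq_minus'; [apply is_lim_seq_const | apply is_lim_seq_weight_total]. }
    replace 0 with (2 * C0 * 0 * 25) by ring.
    apply (is_lim_seq_mult' (fun N => 2 * C0 * t N)); [|apply is_lim_seq_const].
    apply is_lim_seq_mult'; [apply is_lim_seq_const | exact Ht].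
  - intros N. eapply Rle_trans; [apply Cmod_sqsum_le|].
    eapply Rle_trans.
    { apply (sqsumR_le N _ (fun k l => (2 * C0 * t N) * weight k l)). intros k l.
      replace (2 * C0 * t N * weight k l) with (2 * (C0 * weight k l) * t N) by ring.
      apply (sumZ2_tail_le _ _ N (HFkl k l)). }
    rewrite sqsumR_scal. pose proof (sqsumR_weight_le_total N). pose proof (sqsumR_weight_le N).
    apply Rmult_le_compat_l; [unfold t; nra | assumption].
Qed.

Lemma sumZ2_fubini C0 F : dominated2 C0 F ->
  sumZ2 (fun k l => sumZ2 (F k l)) = sumZ2 (fun k' l' => sumZ2 (fun k l => F k l k' l')).
Proof.
  intros HF. apply (is_lim_C_unique (fun N => sqsum N (fun k l => sqsum N (F k l)))).
  - eapply is_lim_C_sumZ2_iterated; eauto.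
  - eapply is_lim_C_ext; [intros N; symmetry; apply sqsum_swap4|].
    apply (is_lim_C_sumZ2_iterated C0). intros k l k' l'.
    rewrite Rmult_assoc, (Rmult_comm (weight k l)), <- Rmult_assoc. apply HF.
Qed.

Lemma sumZ2_real_nonneg C0 (g : Z -> Z -> R) :
  dominated C0 (fun k l => RtoC (g k l)) -> (forall k l, 0 <= g k l) ->
  Im (sumZ2 (fun k l => RtoC (g k l))) = 0 /\ 0 <= Re (sumZ2 (fun k l => RtoC (g k l))).
Proof.
  intros HD Hg. destruct (is_lim_C_sumZ2 _ _ HD) as [HR HI]. split.
  - apply (is_lim_seq_ext _ (fun _ => 0)) in HI.
    { apply is_lim_seq_unique in HI. rewrite Lim_seq_const in HI. injection HI; auto. }
    intros N. rewrite Im_sqsum, (sqsumR_ext N _ (fun k l => 0 * 0)) by (intros; simpl; ring).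
    rewrite sqsumR_scal. ring.
  - refine (is_lim_seq_le _ _ _ _ _ (is_lim_seq_const 0) HR). intros N.
    rewrite Re_sqsum. apply sqsumR_nonneg. exact Hg.
Qed.

(** * The algebra of rapidly decreasing sequences *)

Lemma cexpi_add a b : (cexpi a * cexpi b)%C = cexpi (a + b).
Proof.
  unfold cexpi, Cmult. rewrite cos_plus, sin_plus. apply injective_projections; simpl; ring.
Qed.

Lemma cexpi_conj a : Cconj (cexpi a) = cexpi (- a).
Proof. unfold cexpi, Cconj. rewrite cos_neg, sin_neg. reflexivity. Qed.

Lemma Cmod_cexpi a : Cmod (cexpi a) = 1.
Proof.
  unfold Cmod, cexpi, fst, snd. rewrite <- sqrt_1. f_equal.
  rewrite <- (sin2_cos2 a). unfold Rsqr. ring.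
Qed.

Lemma cexpi_0 : cexpi 0 = 1%C.
Proof. unfold cexpi. rewrite cos_0, sin_0. reflexivity. Qed.

Definition rapid (f : coefs) : Prop :=
  forall j : nat, exists C0, forall k l, Cmod (f k l) <= C0 * weight k l ^ j.

Lemma rapid_bound f j : rapid f ->
  exists C0, 0 <= C0 /\ forall k l, Cmod (f k l) <= C0 * weight k l ^ j.
Proof.
  intros H. destruct (H j) as [C0 HC]. exists C0. split; auto.
  specialize (HC 0%Z 0%Z). pose proof (Cmod_ge_0 (f 0%Z 0%Z)).
  pose proof (pow_lt _ j (weight_pos 0 0)). destruct (Rle_lt_dec 0 C0); nra.
Qed.

(* Schwartz decay of order [4 j] gives decay of order [j] against [weight], because
   [(1 + m^2) (1 + n^2) <= (1 + |m| + |n|)^4]. *)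
Lemma schwartz_rapid p : schwartz p -> rapid p.
Proof.
  intros Hs j. destruct (Hs (4 * j)%nat) as [M HM]. exists M. intros m n.
  specialize (HM m n).
  set (b := 1 + Rabs (IZR m) + Rabs (IZR n)) in *.
  pose proof (Rabs_pos (IZR m)). pose proof (Rabs_pos (IZR n)).
  assert (Hb : 1 <= b) by (unfold b; lra).
  assert (H1 : 1 <= weight m n * b ^ 4).
  { unfold weight, weight1. rewrite <- Rinv_mult.
    assert (Hrho : (1 + IZR m ^ 2) * (1 + IZR n ^ 2) <= b ^ 4).
    { unfold b. rewrite <- (pow2_abs (IZR m)), <- (pow2_abs (IZR n)).
      replace ((1 + Rabs (IZR m) + Rabs (IZR n)) ^ 4)
        with ((1 + Rabs (IZR m) + Rabs (IZR n)) ^ 2 * (1 + Rabs (IZR m) + Rabs (IZR n)) ^ 2)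
        by ring.
      apply Rmult_le_compat; nra. }
    assert (0 < (1 + IZR m ^ 2) * (1 + IZR n ^ 2)) by (apply Rmult_lt_0_compat; nra).
    apply (Rmult_le_reg_l ((1 + IZR m ^ 2) * (1 + IZR n ^ 2))); [assumption|].
    rewrite <- Rmult_assoc, Rinv_r by (apply Rgt_not_eq; assumption). lra. }
  assert (H2 : 1 <= weight m n ^ j * b ^ (4 * j)).
  { rewrite pow_mult, <- Rpow_mult_distr. apply pow_R1_Rle. exact H1. }
  pose proof (Cmod_ge_0 (p m n)). pose proof (pow_lt _ j (weight_pos m n)).
  assert (Hbp : 0 < b ^ (4 * j)) by (apply pow_lt; lra).
  apply (Rmult_le_reg_r (b ^ (4 * j))); [assumption|].
  apply Rle_trans with (b ^ (4 * j) * Cmod (p m n) * (weight m n ^ j * b ^ (4 * j))).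
  - rewrite Rmult_comm, <- (Rmult_1_r (b ^ (4 * j) * Cmod (p m n))) at 1.
    apply Rmult_le_compat_l; [apply Rmult_le_pos|]; lra.
  - replace (M * weight m n ^ j * b ^ (4 * j)) with (M * (weight m n ^ j * b ^ (4 * j))) by ring.
    apply Rmult_le_compat_r; lra.
Qed.

Lemma coefs_ext (a b : coefs) : (forall m n, a m n = b m n) -> a = b.
Proof.
  intros H. apply functional_extensionality; intros m. apply functional_extensionality; apply H.
Qed.

Definition nct_lin (a : C) (x : coefs) (b : C) (y : coefs) : coefs :=
  fun m n => (a * x m n + b * y m n)%C.

Lemma rapid_lin a x b y : rapid x -> rapid y -> rapid (nct_lin a x b y).
Proof.
  intros Hx Hy j. destruct (Hx j) as [C1 H1]. destruct (Hy j) as [C2 H2].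
  exists (Cmod a * C1 + Cmod b * C2). intros k l. unfold nct_lin.
  eapply Rle_trans; [apply Cmod_triangle|]. rewrite !Cmod_mult.
  pose proof (H1 k l). pose proof (H2 k l). pose proof (Cmod_ge_0 a). pose proof (Cmod_ge_0 b).
  nra.
Qed.

Lemma rapid_star th x : rapid x -> rapid (nct_star th x).
Proof.
  intros Hx j. destruct (Hx j) as [C1 H1]. exists C1. intros k l. unfold nct_star.
  rewrite Cmod_mult, Cmod_cexpi, Cmod_conj, Rmult_1_r, <- (weight_opp k l). apply H1.
Qed.

Definition fourier_mult (phi : Z -> Z -> C) (x : coefs) : coefs := fun m n => (phi m n * x m n)%C.

Lemma rapid_fourier_mult phi A x :
  (forall k l, Cmod (phi k l) * weight k l <= A) -> rapid x -> rapid (fourier_mult phi x).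
Proof.
  intros Hphi Hx j. destruct (rapid_bound x (S j) Hx) as [C1 [HC1 H1]].
  exists (A * C1). intros k l. unfold fourier_mult. rewrite Cmod_mult.
  specialize (H1 k l). simpl in H1. pose proof (Cmod_ge_0 (phi k l)).
  pose proof (pow_lt _ j (weight_pos k l)).
  apply Rle_trans with (Cmod (phi k l) * (C1 * (weight k l * weight k l ^ j))).
  - apply Rmult_le_compat_l; assumption.
  - replace (Cmod (phi k l) * (C1 * (weight k l * weight k l ^ j)))
      with ((Cmod (phi k l) * weight k l) * (C1 * weight k l ^ j)) by ring.
    replace (A * C1 * weight k l ^ j) with (A * (C1 * weight k l ^ j)) by ring.
    apply Rmult_le_compat_r; [nra | apply Hphi].
Qed.

Definition dsymbol (mu : bool) (m n : Z) : C := (Ci * RtoC (2 * PI * IZR (if mu then n else m)))%C.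

Lemma dmu_fourier_mult mu x : dmu mu x = fourier_mult (dsymbol mu) x.
Proof. destruct mu; reflexivity. Qed.

Lemma dsymbol_add mu k l m n : dsymbol mu m n = (dsymbol mu k l + dsymbol mu (m - k) (n - l))%C.
Proof. unfold dsymbol. destruct mu; rewrite minus_IZR, !RtoC_mult, RtoC_minus; ring. Qed.

Lemma dsymbol_conj_opp mu m n : Cconj (dsymbol mu (- m) (- n)) = dsymbol mu m n.
Proof.
  unfold dsymbol. rewrite Cmult_conj. destruct mu; rewrite opp_IZR;
    apply injective_projections; simpl; ring.
Qed.

Lemma rapid_dmu mu x : rapid x -> rapid (dmu mu x).
Proof.
  rewrite dmu_fourier_mult. apply (rapid_fourier_mult _ (2 * PI)). intros k l.
  unfold dsymbol. rewrite Cmod_mult, Cmod_Ci, Rmult_1_l, Cmod_R, !Rabs_mult.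
  rewrite (Rabs_right 2), (Rabs_right PI) by (pose proof PI_RGT_0; lra).
  assert (G : forall r s, Rabs (IZR r) * (weight1 r * weight1 s) <= 1).
  { intros r s. rewrite <- Rmult_assoc, <- (Rmult_1_r 1).
    apply Rmult_le_compat; [apply Rmult_le_pos; [apply Rabs_pos|] | | |];
      auto using Rlt_le, weight1_pos, Rabs_IZR_weight1_le, weight1_le_1. }
  rewrite Rmult_assoc. pose proof PI_RGT_0. apply Rle_trans with (2 * PI * 1); [|lra].
  apply Rmult_le_compat_l; [lra|]. unfold weight.
  destruct mu; [rewrite (Rmult_comm (weight1 k))|]; apply G.
Qed.

Lemma nct_star_dmu th mu x : nct_star th (dmu mu x) = dmu mu (nct_star th x).
Proof.
  rewrite !dmu_fourier_mult. apply coefs_ext; intros m n.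
  unfold nct_star, fourier_mult. rewrite Cmult_conj, dsymbol_conj_opp. ring.
Qed.

Definition mul_summand (th : R) (f g : coefs) (m n : Z) : Z -> Z -> C :=
  fun k l => (f k l * g (m - k)%Z (n - l)%Z * cexpi (2 * PI * th * IZR l * IZR (m - k)))%C.

Lemma nct_mul_eq th f g m n : nct_mul th f g m n = sumZ2 (mul_summand th f g m n).
Proof. reflexivity. Qed.

Lemma Cmod_mul_summand th f g m n k l :
  Cmod (mul_summand th f g m n k l) = Cmod (f k l) * Cmod (g (m - k)%Z (n - l)%Z).
Proof. unfold mul_summand. rewrite !Cmod_mult, Cmod_cexpi. ring. Qed.

Lemma dominated_mul_summand th f g m n : rapid f -> rapid g ->
  exists C0, dominated C0 (mul_summand th f g m n).
Proof.
  intros Hf Hg. destruct (rapid_bound f 1 Hf) as [C1 [P1 H1]].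
  destruct (rapid_bound g 0 Hg) as [C2 [P2 H2]].
  exists (C1 * C2). intros k l. rewrite Cmod_mul_summand.
  specialize (H1 k l). specialize (H2 (m - k)%Z (n - l)%Z).
  rewrite pow_1 in H1. rewrite pow_O in H2.
  replace (C1 * C2 * weight k l) with ((C1 * weight k l) * (C2 * 1)) by ring.
  apply Rmult_le_compat; auto using Cmod_ge_0.
Qed.

Lemma rapid_mul th f g : rapid f -> rapid g -> rapid (nct_mul th f g).
Proof.
  intros Hf Hg j. destruct (rapid_bound f (S j) Hf) as [C1 [P1 H1]].
  destruct (rapid_bound g j Hg) as [C2 [P2 H2]].
  exists (50 * (C1 * C2 * 4 ^ j)). intros m n. rewrite nct_mul_eq, Rmult_assoc.
  apply Cmod_sumZ2_le. intros k l. rewrite Cmod_mul_summand.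
  specialize (H1 k l). specialize (H2 (m - k)%Z (n - l)%Z). simpl in H1.
  pose proof (weight_pos k l). pose proof (weight_pos (m - k) (n - l)).
  assert (HP : (weight k l * weight (m - k) (n - l)) ^ j <= (4 * weight m n) ^ j).
  { apply pow_incr. split; [nra | apply weight_peetre]. }
  rewrite !Rpow_mult_distr in HP.
  apply Rle_trans with ((C1 * (weight k l * weight k l ^ j)) * (C2 * weight (m - k) (n - l) ^ j)).
  { apply Rmult_le_compat; auto using Cmod_ge_0. }
  replace ((C1 * (weight k l * weight k l ^ j)) * (C2 * weight (m - k) (n - l) ^ j)) with
    ((C1 * C2 * weight k l) * (weight k l ^ j * weight (m - k) (n - l) ^ j)) by ring.
  replace (C1 * C2 * 4 ^ j * weight m n ^ j * weight k l) with
    ((C1 * C2 * weight k l) * (4 ^ j * weight m n ^ j)) by ring.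
  apply Rmult_le_compat_l; [|assumption]. apply Rmult_le_pos; [apply Rmult_le_pos|]; lra.
Qed.

Lemma nct_mul_lin_l th a x b y z : rapid x -> rapid y -> rapid z ->
  nct_mul th (nct_lin a x b y) z = nct_lin a (nct_mul th x z) b (nct_mul th y z).
Proof.
  intros Hx Hy Hz. apply coefs_ext; intros m n.
  unfold nct_lin at 2. rewrite !nct_mul_eq.
  destruct (dominated_mul_summand th x z m n Hx Hz) as [C1 D1].
  destruct (dominated_mul_summand th y z m n Hy Hz) as [C2 D2].
  rewrite <- (sumZ2_lin _ _ _ _ _ _ D1 D2). apply sumZ2_ext. intros k l.
  unfold mul_summand, nct_lin. ring.
Qed.

Lemma nct_mul_lin_r th a x b y z : rapid x -> rapid y -> rapid z ->
  nct_mul th z (nct_lin a x b y) = nct_lin a (nct_mul th z x) b (nct_mul th z y).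
Proof.
  intros Hx Hy Hz. apply coefs_ext; intros m n.
  unfold nct_lin at 2. rewrite !nct_mul_eq.
  destruct (dominated_mul_summand th z x m n Hz Hx) as [C1 D1].
  destruct (dominated_mul_summand th z y m n Hz Hy) as [C2 D2].
  rewrite <- (sumZ2_lin _ _ _ _ _ _ D1 D2). apply sumZ2_ext. intros k l.
  unfold mul_summand, nct_lin. ring.
Qed.

Lemma nct_star_lin th a x b y :
  nct_star th (nct_lin a x b y) = nct_lin (Cconj a) (nct_star th x) (Cconj b) (nct_star th y).
Proof.
  apply coefs_ext; intros m n.
  unfold nct_star, nct_lin. rewrite Cplus_conj, !Cmult_conj. ring.
Qed.

Lemma nct_int_lin a x b y : nct_int (nct_lin a x b y) = (a * nct_int x + b * nct_int y)%C.
Proof. reflexivity. Qed.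

Lemma nct_mul_zero_r th x : nct_mul th x zero_coefs = zero_coefs.
Proof.
  apply coefs_ext; intros m n.
  rewrite nct_mul_eq. unfold zero_coefs at 2. rewrite <- sumZ2_zero.
  apply sumZ2_ext. intros; unfold mul_summand, zero_coefs. ring.
Qed.

Lemma nct_star_zero th : nct_star th zero_coefs = zero_coefs.
Proof.
  apply coefs_ext; intros m n.
  unfold nct_star, zero_coefs, Cconj, Cmult. apply injective_projections; simpl; ring.
Qed.

Lemma dmu_nct_mul th mu x y : rapid x -> rapid y ->
  dmu mu (nct_mul th x y) = nct_lin 1 (nct_mul th (dmu mu x) y) 1 (nct_mul th x (dmu mu y)).
Proof.
  intros Hx Hy. apply coefs_ext; intros m n.
  unfold nct_lin. rewrite !dmu_fourier_mult. unfold fourier_mult at 1. rewrite !nct_mul_eq.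
  rewrite <- !dmu_fourier_mult.
  destruct (dominated_mul_summand th (dmu mu x) y m n (rapid_dmu mu x Hx) Hy) as [C1 D1].
  destruct (dominated_mul_summand th x (dmu mu y) m n Hx (rapid_dmu mu y Hy)) as [C2 D2].
  destruct (dominated_mul_summand th x y m n Hx Hy) as [C3 D3].
  rewrite <- (sumZ2_lin _ _ _ _ _ _ D1 D2), <- (sumZ2_scal _ _ _ D3).
  apply sumZ2_ext. intros k l. rewrite !dmu_fourier_mult. unfold mul_summand, fourier_mult.
  rewrite (dsymbol_add mu k l m n). ring.
Qed.

Ltac push_IZR := repeat rewrite ?plus_IZR, ?minus_IZR, ?opp_IZR, ?mult_IZR.

Lemma dominated_conj C0 F : dominated C0 F -> dominated C0 (fun k l => Cconj (F k l)).
Proof. intros H k l. rewrite Cmod_conj. apply H. Qed.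

Lemma nct_star_mul th x y : rapid x -> rapid y ->
  nct_star th (nct_mul th x y) = nct_mul th (nct_star th y) (nct_star th x).
Proof.
  intros Hx Hy. apply coefs_ext; intros m n.
  unfold nct_star at 1. rewrite !nct_mul_eq.
  destruct (dominated_mul_summand th x y (- m) (- n) Hx Hy) as [C1 D1].
  destruct (dominated_mul_summand th (nct_star th y) (nct_star th x) m n
              (rapid_star _ _ Hy) (rapid_star _ _ Hx)) as [C2 D2].
  rewrite (sumZ2_conj _ _ D1), <- (sumZ2_scal_r _ _ _ (dominated_conj _ _ D1)).
  rewrite <- (sumZ2_shift _ _ m n D2).
  apply sumZ2_ext. intros k l. unfold mul_summand, nct_star.
  replace (- (k + m))%Z with (- m - k)%Z by ring.
  replace (- (l + n))%Z with (- n - l)%Z by ring.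
  replace (- (m - (k + m)))%Z with k by ring.
  replace (- (n - (l + n)))%Z with l by ring.
  rewrite !Cmult_conj, cexpi_conj.
  match goal with
  | |- (?X * ?Y * cexpi ?a * cexpi ?b = ?U * cexpi ?c * (?V * cexpi ?d) * cexpi ?e)%C =>
    transitivity (X * Y * cexpi (a + b))%C; [rewrite <- cexpi_add; ring|];
    transitivity (X * Y * cexpi (c + d + e))%C; [|rewrite <- !cexpi_add; ring]
  end.
  do 2 f_equal. push_IZR. ring.
Qed.

Lemma nct_int_mul_comm th x y : nct_int (nct_mul th x y) = nct_int (nct_mul th y x).
Proof.
  unfold nct_int. rewrite !nct_mul_eq, <- (sumZ2_opp (mul_summand th y x 0 0)).
  apply sumZ2_ext. intros k l. unfold mul_summand.
  replace (0 - - k)%Z with k by ring. replace (0 - - l)%Z with l by ring.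
  replace (0 - k)%Z with (- k)%Z by ring. replace (0 - l)%Z with (- l)%Z by ring.
  replace (2 * PI * th * IZR (- l) * IZR k) with (2 * PI * th * IZR l * IZR (- k))
    by (push_IZR; ring).
  ring.
Qed.

Definition assoc_summand (th : R) (f g h : coefs) (m n : Z) : Z -> Z -> Z -> Z -> C :=
  fun k l k' l' => (mul_summand th f g k l k' l' *
                    (h (m - k)%Z (n - l)%Z * cexpi (2 * PI * th * IZR l * IZR (m - k))))%C.

Lemma dominated2_assoc_summand th f g h m n : rapid f -> rapid g -> rapid h ->
  exists C0, dominated2 C0 (assoc_summand th f g h m n).
Proof.
  intros Hf Hg Hh.
  destruct (rapid_bound f 2 Hf) as [C1 [P1 H1]].
  destruct (rapid_bound g 1 Hg) as [C2 [P2 H2]].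
  destruct (rapid_bound h 0 Hh) as [C3 [P3 H3]].
  exists (4 * C1 * C2 * C3). intros k l k' l'. unfold assoc_summand.
  rewrite Cmod_mult, Cmod_mul_summand, Cmod_mult, Cmod_cexpi, Rmult_1_r.
  specialize (H1 k' l'). specialize (H2 (k - k')%Z (l - l')%Z). specialize (H3 (m - k)%Z (n - l)%Z).
  rewrite pow_O in H3. rewrite pow_1 in H2.
  pose proof (weight_peetre k' l' k l). pose proof (weight_pos k l). pose proof (weight_pos k' l').
  pose proof (weight_pos (k - k') (l - l')).
  apply Rle_trans with ((C1 * weight k' l' ^ 2) * (C2 * weight (k - k') (l - l')) * (C3 * 1)).
  { apply Rmult_le_compat; auto using Cmod_ge_0, Rmult_le_pos.
    apply Rmult_le_compat; auto using Cmod_ge_0. }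
  replace ((C1 * weight k' l' ^ 2) * (C2 * weight (k - k') (l - l')) * (C3 * 1)) with
    ((C1 * C2 * C3 * weight k' l') * (weight k' l' * weight (k - k') (l - l'))) by ring.
  replace (4 * C1 * C2 * C3 * weight k l * weight k' l') with
    ((C1 * C2 * C3 * weight k' l') * (4 * weight k l)) by ring.
  apply Rmult_le_compat_l; [|assumption].
  apply Rmult_le_pos; [apply Rmult_le_pos; [apply Rmult_le_pos|]|]; lra.
Qed.

Lemma nct_mul_assoc th f g h : rapid f -> rapid g -> rapid h ->
  nct_mul th (nct_mul th f g) h = nct_mul th f (nct_mul th g h).
Proof.
  intros Hf Hg Hh. apply coefs_ext; intros m n.
  rewrite !nct_mul_eq.
  transitivity (sumZ2 (fun k l => sumZ2 (assoc_summand th f g h m n k l))).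
  { apply sumZ2_ext. intros k l. unfold mul_summand at 1. rewrite nct_mul_eq.
    destruct (dominated_mul_summand th f g k l Hf Hg) as [C1 D1].
    rewrite <- Cmult_assoc, <- (sumZ2_scal_r _ _ _ D1). reflexivity. }
  destruct (dominated2_assoc_summand th f g h m n Hf Hg Hh) as [C0 D].
  rewrite (sumZ2_fubini _ _ D). apply sumZ2_ext. intros k' l'.
  assert (DG : dominated (C0 * weight k' l') (fun k l => assoc_summand th f g h m n k l k' l')).
  { intros k l. rewrite Rmult_assoc, (Rmult_comm (weight k' l')), <- Rmult_assoc. apply D. }
  rewrite <- (sumZ2_shift _ _ k' l' DG).
  unfold mul_summand. rewrite nct_mul_eq.
  destruct (dominated_mul_summand th g h (m - k') (n - l') Hg Hh) as [C4 D4].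
  transitivity ((f k' l' * cexpi (2 * PI * th * IZR l' * IZR (m - k'))) *
                sumZ2 (mul_summand th g h (m - k') (n - l')))%C; [|ring].
  rewrite <- (sumZ2_scal _ _ _ D4). apply sumZ2_ext. intros k l.
  unfold assoc_summand, mul_summand.
  replace (k + k' - k')%Z with k by ring. replace (l + l' - l')%Z with l by ring.
  replace (m - (k + k'))%Z with (m - k' - k)%Z by ring.
  replace (n - (l + l'))%Z with (n - l' - l)%Z by ring.
  match goal with
  | |- (?X * ?Y * cexpi ?a * (?Z * cexpi ?b) = ?U * cexpi ?c * (?V * ?W * cexpi ?d))%C =>
    transitivity (X * Y * Z * cexpi (a + b))%C; [rewrite <- cexpi_add; ring|];
    transitivity (X * Y * Z * cexpi (c + d))%C; [|rewrite <- !cexpi_add; ring]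
  end.
  do 2 f_equal. push_IZR. ring.
Qed.

Definition nct_norm2 (th : R) (x : coefs) : C := nct_int (nct_mul th (nct_star th x) x).

Lemma nct_norm2_real_nonneg th x : rapid x -> Im (nct_norm2 th x) = 0 /\ 0 <= Re (nct_norm2 th x).
Proof.
  intros Hx. unfold nct_norm2, nct_int. rewrite nct_mul_eq.
  destruct (dominated_mul_summand th (nct_star th x) x 0 0 (rapid_star _ _ Hx) Hx) as [C0 D0].
  set (g := fun k l => Cmod (x (- k)%Z (- l)%Z) ^ 2).
  assert (E : forall k l, mul_summand th (nct_star th x) x 0 0 k l = RtoC (g k l)).
  { intros k l. unfold mul_summand, nct_star, g.
    replace (0 - k)%Z with (- k)%Z by ring. replace (0 - l)%Z with (- l)%Z by ring.
    rewrite Cmod2_conj.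
    transitivity (Cconj (x (- k)%Z (- l)%Z) * x (- k)%Z (- l)%Z *
       (cexpi (2 * PI * th * IZR k * IZR l) * cexpi (2 * PI * th * IZR l * IZR (- k))))%C; [ring|].
    rewrite cexpi_add, opp_IZR.
    replace (2 * PI * th * IZR k * IZR l + 2 * PI * th * IZR l * - IZR k) with 0 by ring.
    rewrite cexpi_0. ring. }
  rewrite (sumZ2_ext _ _ E). apply (sumZ2_real_nonneg C0).
  - intros k l. rewrite <- E. apply D0.
  - intros k l. apply pow2_ge_0.
Qed.

Lemma nct_norm2_zero th : nct_norm2 th zero_coefs = 0%C.
Proof. unfold nct_norm2. rewrite nct_mul_zero_r. reflexivity. Qed.

#[local] Hint Resolve rapid_mul rapid_lin rapid_star rapid_dmu : rapid.

(** * Projections *)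

Definition tr_pdd (th : R) (p : coefs) (mu nu : bool) : C :=
  nct_int (nct_mul th p (nct_mul th (dmu mu p) (dmu nu p))).

Definition hform (c0 c1 : C) (P : bool -> bool -> C) : C :=
  (Cconj c0 * (c0 * P false false + c1 * P false true) +
   Cconj c1 * (c0 * P true false + c1 * P true true))%C.

Definition metric_form (tau : C) (M : bool -> bool -> C) : C :=
  (RtoC (/ (2 * PI)) *
   fold_right Cplus 0
     (map (fun mn : bool * bool =>
             RtoC (sqrt_det_g tau * ginv tau (fst mn) (snd mn)) * M (fst mn) (snd mn))
          ((false, false) :: (false, true) :: (true, false) :: (true, true) :: nil)))%C.

Lemma delbar_tau_lin tau p : delbar_tau tau p =
  nct_lin (/ (tau - Cconj tau) * tau) (dmu false p) (- / (tau - Cconj tau)) (dmu true p).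
Proof.
  apply coefs_ext; intros m n.
  unfold delbar_tau, nct_scal, nct_sub, nct_lin. simpl. ring.
Qed.

Lemma del_tau_lin tau p : del_tau tau p =
  nct_lin (/ (tau - Cconj tau) * - Cconj tau) (dmu false p) (/ (tau - Cconj tau)) (dmu true p).
Proof.
  apply coefs_ext; intros m n.
  unfold del_tau, nct_scal, nct_add, nct_lin. simpl. ring.
Qed.

Lemma Cconj_inv_sub_conj tau : Cconj (/ (tau - Cconj tau)) = (- / (tau - Cconj tau))%C.
Proof.
  destruct tau as [x y]. unfold Cinv, Cminus, Cplus, Copp, Cconj; simpl.
  replace (x + - x) with 0 by ring. apply injective_projections; simpl; unfold Rdiv; ring.
Qed.

Lemma rapid_delbar_tau tau p : rapid p -> rapid (delbar_tau tau p).
Proof. intros Hp. rewrite delbar_tau_lin. auto with rapid. Qed.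

Lemma rapid_del_tau tau p : rapid p -> rapid (del_tau tau p).
Proof. intros Hp. rewrite del_tau_lin. auto with rapid. Qed.

Section Projection.

Variables (th : R) (p : coefs).
Hypotheses (Hp : rapid p) (Hpp : p = nct_mul th p p) (Hps : p = nct_star th p).

Lemma dmu_projection mu :
  dmu mu p = nct_lin 1 (nct_mul th (dmu mu p) p) 1 (nct_mul th p (dmu mu p)).
Proof. rewrite <- dmu_nct_mul, <- Hpp; auto. Qed.

Lemma dmu_projection_selfadjoint mu : nct_star th (dmu mu p) = dmu mu p.
Proof. rewrite nct_star_dmu, <- Hps. reflexivity. Qed.

Lemma nct_mul_p_p X : rapid X -> nct_mul th p (nct_mul th p X) = nct_mul th p X.
Proof. intros HX. rewrite <- nct_mul_assoc, <- Hpp; auto. Qed.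

Lemma nct_int_dmu_mul_dmu mu nu :
  nct_int (nct_mul th (dmu mu p) (dmu nu p)) = (tr_pdd th p mu nu + tr_pdd th p nu mu)%C.
Proof.
  unfold tr_pdd. rewrite (dmu_projection nu) at 1.
  rewrite nct_mul_lin_r, nct_int_lin, !Cmult_1_l by auto with rapid.
  f_equal.
  - rewrite <- nct_mul_assoc by auto with rapid. apply nct_int_mul_comm.
  - rewrite <- nct_mul_assoc, nct_int_mul_comm, <- nct_mul_assoc by auto with rapid.
    apply nct_int_mul_comm.
Qed.

Lemma nct_int_star_mul_p_r X Y : rapid X -> rapid Y -> nct_star th X = X ->
  nct_int (nct_mul th (nct_star th (nct_mul th X p)) (nct_mul th Y p)) =
  nct_int (nct_mul th p (nct_mul th X Y)).
Proof.
  intros HX HY SX. rewrite nct_star_mul, <- Hps, SX by auto.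
  rewrite <- nct_mul_assoc, nct_int_mul_comm, <- nct_mul_assoc, nct_mul_p_p,
    nct_mul_assoc by auto with rapid.
  reflexivity.
Qed.

Lemma nct_int_star_mul_p_l X Y : rapid X -> rapid Y -> nct_star th X = X ->
  nct_int (nct_mul th (nct_star th (nct_mul th p X)) (nct_mul th p Y)) =
  nct_int (nct_mul th p (nct_mul th Y X)).
Proof.
  intros HX HY SX. rewrite nct_star_mul, <- Hps, SX by auto.
  rewrite nct_mul_assoc, nct_mul_p_p, nct_int_mul_comm, nct_mul_assoc by auto with rapid.
  reflexivity.
Qed.

Lemma nct_norm2_lin_mul_p c0 c1 :
  nct_norm2 th (nct_mul th (nct_lin c0 (dmu false p) c1 (dmu true p)) p) =
  hform c0 c1 (tr_pdd th p).
Proof.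
  unfold nct_norm2.
  rewrite nct_mul_lin_l, nct_star_lin, nct_mul_lin_l, !nct_mul_lin_r, !nct_int_lin
    by auto with rapid.
  rewrite !nct_int_star_mul_p_r by auto using dmu_projection_selfadjoint with rapid.
  reflexivity.
Qed.

Lemma nct_norm2_p_mul_lin c0 c1 :
  nct_norm2 th (nct_mul th p (nct_lin c0 (dmu false p) c1 (dmu true p))) =
  hform c0 c1 (fun mu nu => tr_pdd th p nu mu).
Proof.
  unfold nct_norm2.
  rewrite nct_mul_lin_r, nct_star_lin, nct_mul_lin_l, !nct_mul_lin_r, !nct_int_lin
    by auto with rapid.
  rewrite !nct_int_star_mul_p_l by auto using dmu_projection_selfadjoint with rapid.
  reflexivity.
Qed.

Lemma S_tau_tr_pdd tau :
  S_tau th tau p = metric_form tau (fun mu nu => tr_pdd th p mu nu + tr_pdd th p nu mu)%C.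
Proof.
  change (S_tau th tau p)
    with (metric_form tau (fun mu nu => nct_int (nct_mul th (dmu mu p) (dmu nu p)))).
  f_equal. apply functional_extensionality; intro mu; apply functional_extensionality; intro nu.
  apply nct_int_dmu_mul_dmu.
Qed.

Lemma psi_tr_pdd :
  psi th p = (- / (RtoC (2 * PI) * Ci) * (tr_pdd th p false true - tr_pdd th p true false))%C.
Proof.
  unfold psi. change Defs.d1 with (dmu false). change Defs.d2 with (dmu true). f_equal.
  replace (nct_sub (nct_mul th (dmu false p) (dmu true p)) (nct_mul th (dmu true p) (dmu false p)))
    with (nct_lin 1 (nct_mul th (dmu false p) (dmu true p))
                  (-1) (nct_mul th (dmu true p) (dmu false p))).
  - rewrite nct_mul_lin_r, nct_int_lin by auto with rapid. unfold tr_pdd. ring.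
  - apply coefs_ext; intros m n.
    unfold nct_lin, nct_sub. ring.
Qed.

Lemma nct_star_del_tau tau : nct_star th (del_tau tau p) = delbar_tau tau p.
Proof.
  rewrite del_tau_lin, delbar_tau_lin, nct_star_lin, !dmu_projection_selfadjoint, Cmult_conj,
    Copp_conj, Cconj_conj, Cconj_inv_sub_conj.
  f_equal. ring.
Qed.

Lemma nct_star_p_mul_del_tau tau :
  nct_star th (nct_mul th p (del_tau tau p)) = nct_mul th (delbar_tau tau p) p.
Proof. rewrite nct_star_mul, nct_star_del_tau, <- Hps; auto using rapid_del_tau. Qed.

Lemma nct_star_del_tau_mul_p tau :
  nct_star th (nct_mul th (del_tau tau p) p) = nct_mul th p (delbar_tau tau p).
Proof. rewrite nct_star_mul, nct_star_del_tau, <- Hps; auto using rapid_del_tau. Qed.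

End Projection.

Lemma hform_delbar_coefs tau P : 0 < Im tau ->
  let k := (/ (tau - Cconj tau))%C in
  (hform (k * tau) (- k) P + hform (k * tau) (- k) (fun mu nu => P nu mu) =
     RtoC (PI / (2 * Im tau)) * metric_form tau (fun mu nu => P mu nu + P nu mu))%C /\
  (hform (k * tau) (- k) P - hform (k * tau) (- k) (fun mu nu => P nu mu) =
     RtoC (2 * (PI / (2 * Im tau))) *
     (- / (RtoC (2 * PI) * Ci) * (P false true - P true false)))%C.
Proof.
  intros Hy k. destruct tau as [x y]. simpl in Hy. pose proof PI_RGT_0.
  assert (Hk : k = (0, - / (2 * y))).
  { unfold k, Cinv, Cminus, Cplus, Copp, Cconj; simpl.
    apply injective_projections; simpl; field; nra. }
  assert (Hinv : (/ (RtoC (2 * PI) * Ci))%C = (0, - / (2 * PI))).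
  { unfold Cinv, Cmult, Ci, RtoC; simpl. apply injective_projections; simpl; field; nra. }
  assert (Htau : Cmod (x, y) ^ 2 = x ^ 2 + y ^ 2) by (rewrite Cmod2_alt; reflexivity).
  rewrite Hk, Hinv. unfold hform, metric_form, sqrt_det_g, ginv. rewrite Htau.
  cbn [map fold_right fst snd].
  destruct (P false false) as [a1 a2], (P false true) as [b1 b2],
           (P true false) as [c1 c2], (P true true) as [d1 d2].
  unfold Im, Re; simpl.
  split; unfold Cconj, Cmult, Cplus, Copp, Cminus, RtoC; simpl;
    apply injective_projections; simpl; field; nra.
Qed.

Lemma energy_bound (S ps N1 N2 : C) (c : R) : 0 < c ->
  (N1 + N2 = RtoC c * S)%C -> (N1 - N2 = RtoC (2 * c) * ps)%C ->
  Im N1 = 0 -> 0 <= Re N1 -> Im N2 = 0 -> 0 <= Re N2 ->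
  (Im S = 0 /\ Re S >= 2 * Cmod ps) /\ ((N1 = 0%C \/ N2 = 0%C) -> S = RtoC (2 * Cmod ps)).
Proof.
  intros Hc Hsum Hdiff I1 R1 I2 R2.
  destruct S as [s1 s2], ps as [q1 q2], N1 as [n1 n1'], N2 as [n2 n2'].
  unfold Re, Im in *; simpl in *. subst n1' n2'.
  injection Hsum as Es1 Es2. injection Hdiff as Ed1 Ed2.
  assert (Hs2 : s2 = 0) by (apply (Rmult_eq_reg_l c); lra).
  assert (Hq2 : q2 = 0) by (apply (Rmult_eq_reg_l (2 * c)); lra).
  subst s2 q2.
  assert (Hmod : Cmod (q1, 0) = Rabs q1) by apply Cmod_R.
  rewrite Hmod.
  assert (Hbound : c * (2 * Rabs q1) <= c * s1) by (unfold Rabs; destruct (Rcase_abs q1); lra).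
  split; [split; [reflexivity | apply Rle_ge, (Rmult_le_reg_l c); assumption]|].
  intros Hzero. unfold RtoC. f_equal. apply (Rmult_eq_reg_l c); [|lra].
  destruct Hzero as [H | H]; injection H; intros; unfold Rabs; destruct (Rcase_abs q1); nra.
Qed.

Theorem mainTheorem1 (theta : R) (tau : C) (p : coefs) :
  0 < Im tau ->
  is_projection theta p ->
  (Im (S_tau theta tau p) = 0 /\ Re (S_tau theta tau p) >= 2 * Cmod (psi theta p)) /\
  ((nct_mul theta (delbar_tau tau p) p = zero_coefs \/
    nct_mul theta p (del_tau tau p) = zero_coefs \/
    nct_mul theta (del_tau tau p) p = zero_coefs \/
    nct_mul theta p (delbar_tau tau p) = zero_coefs) ->
   S_tau theta tau p = RtoC (2 * Cmod (psi theta p))).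
Proof.
  intros Hy [Hs [Hpp Hps]].
  pose proof (schwartz_rapid p Hs) as Hp.
  destruct (hform_delbar_coefs tau (tr_pdd theta p) Hy) as [Hsum Hdiff].
  rewrite <- nct_norm2_lin_mul_p, <- nct_norm2_p_mul_lin, <- delbar_tau_lin in Hsum, Hdiff by auto.
  rewrite <- S_tau_tr_pdd in Hsum by auto. rewrite <- psi_tr_pdd in Hdiff by auto.
  pose proof (rapid_delbar_tau tau p Hp) as Hdelbar.
  destruct (nct_norm2_real_nonneg theta (nct_mul theta (delbar_tau tau p) p)) as [I1 R1];
    [auto with rapid|].
  destruct (nct_norm2_real_nonneg theta (nct_mul theta p (delbar_tau tau p))) as [I2 R2];
    [auto with rapid|].
  assert (Hc : 0 < PI / (2 * Im tau)) by (pose proof PI_RGT_0; apply Rdiv_lt_0_compat; lra).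
  destruct (energy_bound _ _ _ _ _ Hc Hsum Hdiff I1 R1 I2 R2) as [Hineq Heq].
  split; [exact Hineq|]. intros Hzero. apply Heq.
  destruct Hzero as [H | [H | [H | H]]].
  - left. rewrite H. apply nct_norm2_zero.
  - left. rewrite <- (nct_star_p_mul_del_tau theta p Hp Hps), H, nct_star_zero.
    apply nct_norm2_zero.
  - right. rewrite <- (nct_star_del_tau_mul_p theta p Hp Hps), H, nct_star_zero.
    apply nct_norm2_zero.
  - right. rewrite H. apply nct_norm2_zero.
Qed.
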